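(* Every cyclic $\mathrm{STS}(v)$ with $v>7$ admits a zero-sum $4$-flow.
   Context: A Steiner triple system $\mathrm{STS}(v)$ is a pair $(X,\mathcal{B})$ with $|X|=v$ and $\mathcal{B}$ a collection of 3-subsets of $X$ such that every 2-subset lies in exactly one block. It is cyclic if it has an automorphism (a permutation of $X$ mapping blocks to blocks) that is a single cycle of length $v$. For integer $n\ge2$, a zero-sum $n$-flow is a map $f:\mathcal{B}\to\{\pm1,\ldots,\pm(n-1)\}$ with $\sum_{B\ni x} f(B)=0$ for every point $x$. *)

From mathcomp Require Import all_boot all_order all_algebra all_fingroup.
Set Implicit Arguments. Unset Strict Implicit. Unset Printing Implicit Defensive.
Import GRing.Theory Num.Theory.

Definition is_STS (T : finType) (B : {set {set T}}) : Prop :=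
  (forall b, b \in B -> #|b| = 3) /\
  (forall p : {set T}, #|p| = 2 -> exists! b, b \in B /\ p \subset b).

Definition is_automorphism (T : finType) (B : {set {set T}}) (s : {perm T}) : Prop :=
  forall b, b \in B -> s @: b \in B.

Definition is_full_cycle (T : finType) (s : {perm T}) : Prop :=
  exists x : T, #|porbit s x| = #|T|.

Definition is_cyclic_STS (T : finType) (B : {set {set T}}) : Prop :=
  is_STS B /\ exists s : {perm T}, is_automorphism B s /\ is_full_cycle s.

Definition zero_sum_flow (T : finType) (B : {set {set T}}) (n : nat)
    (f : {set T} -> int) : Prop :=
  (forall b, b \in B -> f b != 0 /\ (`|f b| <= (n.-1)%:Z)%R) /\
  (forall x : T, (\sum_(b in B | x \in b) f b)%R = 0%R).

Definition admits_zero_sum_flow (T : finType) (B : {set {set T}}) (n : nat) : Prop :=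
  exists f : {set T} -> int, zero_sum_flow B n f.

From mathcomp Require Import all_boot all_order all_algebra all_fingroup.
From mathcomp Require Import zify.
Set Implicit Arguments. Unset Strict Implicit. Unset Printing Implicit Defensive.
Import GRing.Theory Num.Theory.

(* Let s be the full cycle and G = <[s]>.  G is abelian and transitive on the
   points, hence regular, and it permutes the blocks.  We look for a flow that
   is constant on G-orbits of blocks; by transitivity its sum vanishes at every
   point as soon as it vanishes at one fixed point x0.  The blocks through x0
   (the "star" of x0) are grouped according to the G-orbit they lie in; by
   regularity an orbit of a 3-block meets the star in at most 3 blocks.  So the
   condition at x0 reads  sum_C g(C) * m(C) = 0  with multiplicities m(C) in
   {1,2,3}, and since the star has (v-1)/2 >= 4 blocks there are at least two
   orbits C.  Such a weighted sum can always be solved with values in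
   {+-1,+-2,+-3}: pair orbits off as (m', -m), and treat a leftover triple by
   exhaustive search. *)

Section WeightedZeroSums.
Local Open Scope ring_scope.

Definition flow_value (a : int) : bool := (a != 0) && (`|a| <= 3).

Definition balanced (X : eqType) (s : seq X) (w : X -> nat) (g : X -> int) : Prop :=
  {in s, forall x, flow_value (g x)} /\ \sum_(x <- s) g x *+ w x = 0.

Lemma flow_value_weight (w : nat) : (0 < w <= 3)%N -> flow_value w%:Z.
Proof. by case: w => [|[|[|[|]]]]. Qed.

Lemma flow_valueN (a : int) : flow_value (- a) = flow_value a.
Proof. by rewrite /flow_value oppr_eq0 normrN. Qed.

Lemma balanced_pair (X : eqType) (a b : X) (w : X -> nat) :
  a != b -> (0 < w a <= 3)%N -> (0 < w b <= 3)%N ->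
  balanced [:: a; b] w (fun x => if x == a then (w b)%:Z else - (w a)%:Z).
Proof.
move=> ab wa wb; rewrite /balanced !big_cons big_nil eqxx eq_sym (negbTE ab).
split; last first.
  by rewrite addr0 mulNrn -[Posz (w a)]natz -[Posz (w b)]natz -!mulrnA mulnC subrr.
move=> x; rewrite !inE => /orP[] /eqP->; first by rewrite eqxx flow_value_weight.
by rewrite eq_sym (negbTE ab) flow_valueN flow_value_weight.
Qed.

Lemma triple_zero_sum (w1 w2 w3 : nat) :
  (0 < w1 <= 3)%N -> (0 < w2 <= 3)%N -> (0 < w3 <= 3)%N ->
  exists a1 a2 a3 : int, [/\ flow_value a1, flow_value a2, flow_value a3 &
     a1 *+ w1 + a2 *+ w2 + a3 *+ w3 = 0].
Proof.
pose vals : seq int := [:: 1; -1; 2; -2; 3; -3].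
have check : all (fun w1 => all (fun w2 => all (fun w3 =>
   has (fun a1 => has (fun a2 => has (fun a3 =>
     a1 *+ w1 + a2 *+ w2 + a3 *+ w3 == 0) vals) vals) vals)
   [:: 1; 2; 3]%N) [:: 1; 2; 3]%N) [:: 1; 2; 3]%N by vm_compute.
have weight w : (0 < w <= 3)%N -> w \in [:: 1; 2; 3]%N by case: w => [|[|[|[|]]]].
have valsP a : a \in vals -> flow_value a by apply/allP: a.
move=> /weight h1 /weight h2 /weight h3.
move: (allP check _ h1) => /allP /(_ _ h2) /allP /(_ _ h3) /hasP [a1 /valsP m1].
move=> /hasP [a2 /valsP m2] /hasP [a3 /valsP m3] /eqP E.
by exists a1, a2, a3.
Qed.

Lemma balanced_triple (X : eqType) (a b c : X) (w : X -> nat) :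
  uniq [:: a; b; c] -> (0 < w a <= 3)%N -> (0 < w b <= 3)%N -> (0 < w c <= 3)%N ->
  exists g, balanced [:: a; b; c] w g.
Proof.
rewrite /= !inE !negb_or => /and3P[/andP[ab ac] bc _] wa wb wc.
have [a1 [a2 [a3 [v1 v2 v3 E]]]] := triple_zero_sum wa wb wc.
exists (fun x => if x == a then a1 else if x == b then a2 else a3); split.
  by move=> x _; case: (x == a) => //; case: (x == b).
rewrite !big_cons big_nil eqxx eq_sym (negbTE ab) eqxx eq_sym (negbTE ac).
by rewrite eq_sym (negbTE bc) addr0 addrA.
Qed.

Lemma balanced_cat (X : eqType) (s1 s2 : seq X) (w : X -> nat) (g1 g2 : X -> int) :
  {in s1, forall x, x \notin s2} -> balanced s1 w g1 -> balanced s2 w g2 ->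
  balanced (s1 ++ s2) w (fun x => if x \in s1 then g1 x else g2 x).
Proof.
move=> disj [v1 E1] [v2 E2]; split.
  move=> x; rewrite mem_cat; case: ifP => [/v1 //|_ /=]; exact: v2.
have sum1 : \sum_(x <- s1) (if x \in s1 then g1 x else g2 x) *+ w x = 0.
  by rewrite -[RHS]E1; apply: eq_big_seq => x ->.
have sum2 : \sum_(x <- s2) (if x \in s1 then g1 x else g2 x) *+ w x = 0.
  by rewrite -[RHS]E2; apply: eq_big_seq => x xs2; case: ifP => // /disj; rewrite xs2.
by rewrite big_cat /= sum1 sum2 addr0.
Qed.

(* At least two distinct indices with weights in {1,2,3} can always be
   balanced: split off pairs, ending with a pair or a triple. *)
Lemma balanced_exists (X : eqType) (s : seq X) (w : X -> nat) :
  uniq s -> (1 < size s)%N -> {in s, forall x, 0 < w x <= 3}%N ->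
  exists g, balanced s w g.
Proof.
have [n] := ubnP (size s); elim: n s => // n IH [|a [|b rest]] //= sz.
move=> /and3P[]; rewrite !inE negb_or => /andP[ab ars] brs urest _ ws.
have wa : (0 < w a <= 3)%N by apply: ws; rewrite !inE eqxx.
have wb : (0 < w b <= 3)%N by apply: ws; rewrite !inE eqxx orbT.
have wrest : {in rest, forall x, 0 < w x <= 3}%N.
  by move=> x xr; apply: ws; rewrite !inE xr !orbT.
clear ws; case: rest => [|c [|d rest]] in sz ars brs urest wrest *.
- by eexists; apply: balanced_pair.
- apply: balanced_triple => //=; last by apply: wrest; rewrite inE.
  by move: ars; rewrite /= brs !inE negb_or ab => ->.
- have [g grest] := IH [:: c, d & rest] (leq_trans (ltnSn _) (ltnW sz)) urest isT wrest.
  eexists; apply: (balanced_cat (s1 := [:: a; b])) (balanced_pair ab wa wb) grest.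
  by move=> x; rewrite !inE => /orP[] /eqP->.
Qed.

Lemma balanced_on_set (X : finType) (P : {set X}) (w : X -> nat) :
  (1 < #|P|)%N -> {in P, forall x, 0 < w x <= 3}%N ->
  exists g : X -> int,
    {in P, forall x, flow_value (g x)} /\ \sum_(x in P) g x *+ w x = 0.
Proof.
rewrite cardE => sizeP wP.
have wenum : {in enum P, forall x, 0 < w x <= 3}%N by move=> x; rewrite mem_enum => /wP.
have [g [gval gsum]] := balanced_exists (enum_uniq (mem P)) sizeP wenum.
exists g; split; first by move=> x xP; apply: gval; rewrite mem_enum.
by rewrite -big_enum.
Qed.

End WeightedZeroSums.

Lemma card_bigcup_le (I U : finType) (P : {pred I}) (F : I -> {set U}) :
  (#|\bigcup_(i in P) F i| <= \sum_(i in P) #|F i|)%N.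
Proof.
elim/big_rec2: _ => [|i A n _ IH]; first by rewrite cards0.
by apply: leq_trans (leq_card_setU _ _) _; rewrite leq_add2l.
Qed.

Lemma setact_perm (T : finType) (b : {set T}) (t : {perm T}) : ('P^*)%act b t = t @: b.
Proof. by rewrite /= /setact; apply: eq_imset. Qed.

Section CyclicBlockDesign.

Variables (T : finType) (B : {set {set T}}) (s : {perm T}) (x0 : T).
Hypothesis blocks3 : forall b, b \in B -> #|b| = 3.
Hypothesis s_aut : is_automorphism B s.
Hypothesis s_full : #|porbit s x0| = #|T|.

Local Notation G := <[s]>%g.

Lemma cycle_transitive (y : T) : exists2 t, t \in G & y = t x0.
Proof.
have porbT : porbit s x0 = [set: T].
  by apply/eqP; rewrite eqEcard subsetT cardsT s_full leqnn.
have : y \in porbit s x0 by rewrite porbT inE.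
by rewrite [@porbit]unlock => /imsetP[t Ht ->]; exists t.
Qed.

(* G acts regularly: an element of G is determined by the image of one
   point, because G is abelian and transitive. *)
Lemma cycle_regular (t u : {perm T}) (p : T) : t \in G -> u \in G -> t p = u p -> t = u.
Proof.
move=> tG uG tup; apply/permP => y.
have [q qG pE] := cycle_transitive p.
have [r rG yE] := cycle_transitive y.
pose v := (q^-1 * r)%g.
have yv : y = v p by rewrite permM pE permK.
have commute_v z : z \in G -> z (v p) = v (z p).
  move=> zG; rewrite -!permM; congr (fun m : {perm T} => m p).
  by apply: (centsP (cycle_abelian s)); rewrite // groupM ?groupV.
by rewrite yv !commute_v // tup.
Qed.

Lemma cycle_block (t : {perm T}) (b : {set T}) : t \in G -> b \in B -> t @: b \in B.
Proof.
move=> /cycleP[i ->]; elim: i b => [|i IH] b bB.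
  by rewrite expg0 (eq_imset (g := id)) ?imset_id // => x; rewrite perm1.
rewrite expgSr (eq_imset (g := s \o (s ^+ i)%g)) => [|x]; last by rewrite permM.
by rewrite imset_comp; apply/s_aut/IH.
Qed.

Lemma cycle_blockE (t : {perm T}) (b : {set T}) : t \in G -> (t @: b \in B) = (b \in B).
Proof.
move=> tG; apply/idP/idP => [tbB|]; last exact: cycle_block.
have -> : b = (t^-1)%g @: (t @: b).
  by rewrite -imset_comp (eq_imset (g := id)) ?imset_id // => x /=; rewrite permK.
by apply: cycle_block; rewrite ?groupV.
Qed.

Lemma orbit_translate (t : {perm T}) (b : {set T}) :
  t \in G -> orbit 'P^* G (t @: b) = orbit 'P^* G b.
Proof. by move=> tG; rewrite -setact_perm orbit_act. Qed.

Definition star : {set {set T}} := [set b in B | x0 \in b].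

Definition star_orbit (b : {set T}) : {set {set T}} := orbit 'P^* G b :&: star.

(* The G-orbits of blocks, each represented by its trace on the star. *)
Definition star_orbits : {set {set {set T}}} := star_orbit @: star.

Definition orbit_mult (C : {set {set T}}) : nat :=
  #|[set b in star | star_orbit b == C]|.

Lemma star_orbit_translate (t : {perm T}) (b : {set T}) :
  t \in G -> star_orbit (t @: b) = star_orbit b.
Proof. by move=> tG; rewrite /star_orbit orbit_translate. Qed.

(* An orbit of b meets the star in at most #|b| blocks: a block t(b)
   through x0 is determined by the point of b that t sends to x0. *)
Lemma star_orbit_card (b : {set T}) : #|star_orbit b| <= #|b|.
Proof.
pose lift p := (odflt 1 [pick t in G | t p == x0])%g @: b.
apply: leq_trans (leq_imset_card lift b); apply: subset_leq_card; apply/subsetP => c.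
rewrite inE => /andP[/orbitP[t tG <-]]; rewrite setact_perm inE => /andP[_].
case/imsetP=> p pb x0E; apply/imsetP; exists p => //; rewrite /lift.
case: pickP => [u /andP[uG /eqP up] | none]; last first.
  by have := none t; rewrite tG -x0E eqxx.
by rewrite (cycle_regular uG tG (etrans up x0E)).
Qed.

Lemma star_orbit_mem (b : {set T}) : b \in B -> star_orbit b \in star_orbits.
Proof.
move=> bB; have /card_gt0P[p pb] : 0 < #|b| by rewrite blocks3.
have [t tG pE] := cycle_transitive p.
have tiG : (t^-1)%g \in G by rewrite groupV.
apply/imsetP; exists ((t^-1)%g @: b); last by rewrite star_orbit_translate.
rewrite inE cycle_blockE // bB /=; apply/imsetP; exists p => //.
by rewrite pE permK.
Qed.

Lemma orbit_mult_bounds (C : {set {set T}}) :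
  C \in star_orbits -> 0 < orbit_mult C <= 3.
Proof.
case/imsetP=> b0 b0star ->; apply/andP; split.
  by apply/card_gt0P; exists b0; rewrite inE b0star eqxx.
have b0B : b0 \in B by move: b0star; rewrite inE => /andP[].
rewrite -(blocks3 b0B); apply: leq_trans (star_orbit_card b0); apply: subset_leq_card.
apply/subsetP => b; rewrite inE => /andP[bstar /eqP <-].
by rewrite /star_orbit inE bstar andbT orbit_refl.
Qed.

Lemma sum_over_star (g : {set {set T}} -> int) :
  (\sum_(b in B | x0 \in b) g (star_orbit b)
   = \sum_(C in star_orbits) g C *+ orbit_mult C)%R.
Proof.
rewrite (eq_bigl (fun b => b \in star)) => [|b]; last by rewrite inE.
rewrite (partition_big_imset star_orbit) /=; apply: eq_bigr => C _.
rewrite (eq_bigr (fun _ => g C)) => [|b /andP[_ /eqP <-] //].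
rewrite (eq_bigl (fun b => b \in [set b in star | star_orbit b == C])) => [|b].
  by rewrite sumr_const.
by rewrite inE.
Qed.

Lemma sum_translate (f : {set T} -> int) :
  (forall (t : {perm T}) (b : {set T}), t \in G -> f (t @: b) = f b) ->
  forall x, (\sum_(b in B | x \in b) f b = \sum_(b in B | x0 \in b) f b)%R.
Proof.
move=> f_inv x; have [t tG ->] := cycle_transitive x.
rewrite (reindex_inj (imset_inj (@perm_inj _ t))) /=.
apply: eq_big => [b|b _]; last exact: f_inv.
by rewrite cycle_blockE // mem_imset //; exact: perm_inj.
Qed.

Hypothesis pairs_covered :
  forall p : {set T}, #|p| = 2 -> exists2 b, b \in B & p \subset b.

(* The blocks through x0 cover the other v - 1 points, two per block,
   so there are at least 4 of them when v > 7. *)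
Lemma star_card : 7 < #|T| -> 3 < #|star|.
Proof.
move=> bigT.
have cover : [set: T] :\ x0 \subset \bigcup_(b in star) (b :\ x0).
  apply/subsetP => y; rewrite !inE andbT => yx0.
  have [b bB pb] : exists2 b, b \in B & [set x0; y] \subset b.
    by apply: pairs_covered; rewrite cards2 eq_sym yx0.
  apply/bigcupP; exists b; first by rewrite inE bB (subsetP pb) ?set21.
  by rewrite !inE yx0 (subsetP pb) ?set22.
have := leq_trans (subset_leq_card cover) (card_bigcup_le _ _).
rewrite (eq_bigr (fun _ => 2)) => [|b]; last first.
  by rewrite inE => /andP[/blocks3 b3 xb]; move: b3; rewrite (cardsD1 x0) xb => -[].
rewrite sum_nat_const; move: (cardsD1 x0 [set: T]); rewrite inE cardsT.
by move: bigT; lia.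
Qed.

(* Hence, multiplicities being at most 3, there are at least two orbits. *)
Lemma star_orbits_card : 7 < #|T| -> 1 < #|star_orbits|.
Proof.
move=> /star_card; have -> : #|star| = \sum_(C in star_orbits) orbit_mult C.
  rewrite -sum1_card (partition_big_imset star_orbit) /=; apply: eq_bigr => C _.
  by rewrite /orbit_mult -sum1_card; apply: eq_bigl => b; rewrite inE.
have : \sum_(C in star_orbits) orbit_mult C <= \sum_(C in star_orbits) 3.
  by apply: leq_sum => C /orbit_mult_bounds /andP[].
by rewrite sum_nat_const; lia.
Qed.

Lemma cyclic_flow : 7 < #|T| -> admits_zero_sum_flow B 4.
Proof.
move=> bigT.
have [g [gval gsum]] := balanced_on_set (star_orbits_card bigT) orbit_mult_bounds.
exists (fun b => g (star_orbit b)); split.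
  by move=> b /star_orbit_mem /gval /andP[].
move=> x; rewrite sum_translate => [|t b tG]; last by rewrite star_orbit_translate.
by rewrite sum_over_star; exact: gsum.
Qed.

End CyclicBlockDesign.

Unset Implicit Arguments.

Theorem mainTheorem7 (T : finType) (B : {set {set T}}) :
  is_cyclic_STS B -> 7 < #|T| -> admits_zero_sum_flow B 4.
Proof.
move=> [[blocks3 pairs] [s [s_aut [x0 s_full]]]] bigT.
apply: (cyclic_flow blocks3 s_aut s_full _ bigT) => p p2.
by have [b [[bB pb] _]] := pairs p p2; exists b.
Qed.
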